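(* Suppose a deterministic algorithm $A$, given $n$ elements, guarantees that after $m$ comparisons it can list $r$ elements, each of which is guaranteed to be $k$-greater than at least $q$ elements. Then $m = \Omega\left(\max\{q^{1+1/(2^k-1)},\, q\cdot r^{1/2^{k-1}}\}\right)$, with an absolute implied constant.
   Context: Model of imprecise comparisons: there are $n$ elements, each with a fixed unknown real value; we identify an element with its value. Asked to compare $x_i$ and $x_j$, the comparator answers either ''$x_i \ge x_j$'' or ''$x_j \ge x_i$''. If $|x_i-x_j|>1$ the answer is correct; if $|x_i-x_j|\le 1$ the answer is arbitrary (possibly adversarial and adaptive). An element $x$ is $k$-greater than $y$ if $x \ge y - k$. ''Guaranteed'' means the property holds for every assignment of values and every comparator behaviour consistent with the answers received. *)

From HB Require Import structures.
From mathcomp Require Import all_boot all_order all_algebra.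
From mathcomp Require Import reals exp.
Set Implicit Arguments. Unset Strict Implicit. Unset Printing Implicit Defensive.
Import Order.TTheory GRing.Theory Num.Theory.
Local Open Scope ring_scope.

(* A deterministic comparison algorithm on n elements (indexed by 'I_n) is a
   decision tree.  [CNode i j t1 t2] asks the comparator to compare x_i and x_j;
   the algorithm continues with [t1] if the answer is "x_i >= x_j" and with
   [t2] if the answer is "x_j >= x_i".  [CLeaf out] stops and lists [out]. *)
Inductive ctree (n : nat) : Type :=
  | CLeaf of seq 'I_n
  | CNode of 'I_n & 'I_n & ctree n & ctree n.

Fixpoint depth n (t : ctree n) : nat :=
  match t with
  | CLeaf _ => 0%N
  | CNode _ _ t1 t2 => (maxn (depth t1) (depth t2)).+1
  end.

(* An answer "x_a >= x_b" is recorded as the pair (a, b).  It is consistent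
   with the values x iff it is not a wrong answer on a pair at distance > 1,
   i.e. iff x_b - x_a <= 1. *)
Definition consistent (R : realType) n (x : 'I_n -> R)
    (hist : seq ('I_n * 'I_n)) : Prop :=
  forall p, p \in hist -> x p.2 - x p.1 <= 1.

Definition kgreater (R : realType) (k : nat) (xe xy : R) : bool :=
  xy - k%:R <= xe.

Definition nb_kdominated (R : realType) n (x : 'I_n -> R) (k : nat) (e : 'I_n)
  : nat := #|[set y : 'I_n | (y != e) && kgreater k (x e) (x y)]|.

Fixpoint guarantees (R : realType) n (r q k : nat) (t : ctree n)
    (hist : seq ('I_n * 'I_n)) : Prop :=
  match t with
  | CLeaf out =>
      forall x : 'I_n -> R, consistent x hist ->
        [/\ size out = r, uniq out &
            forall e, e \in out -> (q <= nb_kdominated x k e)%N]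
  | CNode i j t1 t2 =>
      guarantees R r q k t1 ((i, j) :: hist) /\
      guarantees R r q k t2 ((j, i) :: hist)
  end.

From HB Require Import structures.
From mathcomp Require Import all_boot all_order all_algebra.
From mathcomp Require Import reals exp.
From mathcomp Require Import ring lra zify.
Set Implicit Arguments. Unset Strict Implicit. Unset Printing Implicit Defensive.
Import Order.TTheory GRing.Theory Num.Theory.

(* The adversary answers each query in favour of the element of currently
   smaller degree in the graph of answers, where "x_a >= x_b" is an edge a -> b.
   Giving every element its distance from e, capped at k + 1, is consistent
   with all answers and makes e k-greater only than the elements of the ball
   B_k(e) of radius k around e, so every listed element e has |B_k(e)| > q.
   Thanks to the degree balancing, an element has at most T out-neighbours of
   degree < T, and at most 2M/T elements have degree >= T,
   where M <= m is the number of answers; hence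
   T |B_{j+1}| <= T (T + 1) |B_j| + 2M.  Choosing T about sqrt(M / |B_j|) at
   every step yields |B_k|^(2^k) = O(M)^(2^k - 1), and the same recurrence for
   the average ball size over the r listed elements yields
   q^(2^(k-1)) r = O(M)^(2^(k-1)). *)

Lemma card_bigcup_le (I T : finType) (A : {pred I}) (F : I -> {set T}) :
  #|\bigcup_(i in A) F i| <= \sum_(i in A) #|F i|.
Proof.
elim/big_rec2: _ => [|i s U _ leUs]; first by rewrite cards0.
by apply: leq_trans (leq_card_setU _ _) _; rewrite leq_add2l.
Qed.

Section AnswerGraph.
Variable n : nat.
Implicit Types (h : seq ('I_n * 'I_n)) (a b e v : 'I_n).

Definition deg h v : nat := count (fun p => (p.1 == v) || (p.2 == v)) h.

Fixpoint balanced h : bool :=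
  if h is p :: h' then (deg h' p.1 <= deg h' p.2) && balanced h' else true.

Lemma balanced_leaf (R : realType) r q k (t : ctree n) hist :
  balanced hist -> guarantees R r q k t hist ->
  exists out h, [/\ balanced h, size h <= depth t + size hist &
    forall x : 'I_n -> R, consistent x h ->
      [/\ size out = r, uniq out &
          forall e, e \in out -> q <= nb_kdominated x k e]].
Proof.
elim: t hist => [out|i j t1 IH1 t2 IH2] hist bal_hist /=.
  by move=> G; exists out, hist.
case=> G1 G2; case: (leqP (deg hist i) (deg hist j)) => Hij.
  have [|out [h [bal_h size_h Hh]]] := IH1 ((i, j) :: hist) _ G1.
    by rewrite /= Hij bal_hist.
  exists out, h; split=> //; apply: leq_trans size_h _.
  by rewrite /= addnS ltnS leq_add2r leq_maxl.
have [|out [h [bal_h size_h Hh]]] := IH2 ((j, i) :: hist) _ G2.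
  by rewrite /= (ltnW Hij) bal_hist.
exists out, h; split=> //; apply: leq_trans size_h _.
by rewrite /= addnS ltnS leq_add2r leq_maxr.
Qed.

Definition out_nbrs h a : {set 'I_n} := [set b | (a, b) \in h].

Lemma card_out_nbrs h a : #|out_nbrs h a| <= count (fun p => p.1 == a) h.
Proof.
rewrite -size_filter -(size_map snd); apply: leq_trans (card_size _).
apply: subset_leq_card; apply/subsetP => b; rewrite inE => ab.
by apply/mapP; exists (a, b); rewrite // mem_filter /= eqxx.
Qed.

Fixpoint reach h e j : {set 'I_n} :=
  if j is j'.+1 then reach h e j' :|: \bigcup_(a in reach h e j') out_nbrs h a
  else [set e].

Section Reach.
Variable h : seq ('I_n * 'I_n).

Lemma reach_mono e i j : i <= j -> reach h e i \subset reach h e j.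
Proof.
move=> /subnK <-; elim: (j - i) => [|d IH] //=.
exact: subset_trans IH (subsetUl _ _).
Qed.

Lemma reach_center e j : e \in reach h e j.
Proof. by apply: (subsetP (reach_mono e (leq0n j))); rewrite set11. Qed.

Lemma reach_step e j a b : (a, b) \in h -> a \in reach h e j -> b \in reach h e j.+1.
Proof.
by move=> ab aj; rewrite /= in_setU; apply/orP; right; apply/bigcupP; exists a;
  rewrite ?inE.
Qed.

(* the distance from e to v, capped at k + 1 *)
Definition capped_dist e k v : nat := \sum_(j < k.+1) (v \notin reach h e j).

Lemma capped_dist_edge e k a b :
  (a, b) \in h -> capped_dist e k b <= (capped_dist e k a).+1.
Proof.
move=> ab; rewrite /capped_dist big_ord_recl big_ord_recr /= -add1n.
apply: leq_add; first by case: (_ \notin _).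
apply: leq_trans (leq_addr _ _); apply: leq_sum => j _.
case: (boolP (a \in reach h e j)) => aj /=; last by case: (_ \notin _).
by rewrite /bump /= (reach_step ab aj).
Qed.

Lemma capped_dist_center e k : capped_dist e k e = 0.
Proof.
by apply/eqP; rewrite sum_nat_eq0; apply/forallP => j; rewrite reach_center.
Qed.

Lemma capped_dist_far e k v : v \notin reach h e k -> capped_dist e k v = k.+1.
Proof.
move=> vk; rewrite /capped_dist (eq_bigr (fun _ => 1)) ?sum1_card ?card_ord // => j _.
apply/eqP; rewrite eqb1; apply: contra vk; apply: (subsetP (reach_mono e _)).
by rewrite -ltnS.
Qed.

Variable R : realType.
Local Open Scope ring_scope.

Lemma consistent_capped_dist e k :
  consistent (fun v => (capped_dist e k v)%:R : R) h.
Proof.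
by move=> [a b] ab /=; rewrite lerBlDr addrC natr1 ler_nat capped_dist_edge.
Qed.

Lemma nb_kdominated_capped_dist e k :
  (nb_kdominated (fun v => (capped_dist e k v)%:R : R) k e < #|reach h e k|)%N.
Proof.
rewrite /nb_kdominated [X in (_ < X)%N](cardsD1 e) reach_center add1n ltnS.
apply: subset_leq_card; apply/subsetP => y.
rewrite !inE /kgreater capped_dist_center lerBlDr add0r ler_nat => /andP [-> /=].
by apply: contraLR => yk; rewrite capped_dist_far // -ltnNge.
Qed.

Lemma guaranteed_lt_card_reach q k e :
  (forall x : 'I_n -> R, consistent x h -> q <= nb_kdominated x k e)%N ->
  (q < #|reach h e k|)%N.
Proof.
move=> G; apply: leq_ltn_trans (nb_kdominated_capped_dist e k).
exact/G/consistent_capped_dist.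
Qed.

End Reach.
End AnswerGraph.

Section Growth.
Variable n : nat.
Implicit Types (h : seq ('I_n * 'I_n)) (a b e v : 'I_n).

Definition light_nbrs h T a := [set b in out_nbrs h a | deg h b < T].

Lemma card_light_nbrs h T a : balanced h -> #|light_nbrs h T a| <= T.
Proof.
elim: h => [|[a' b'] h IH] /=.
  by move=> _; rewrite (_ : light_nbrs _ _ _ = set0) ?cards0 //; apply/setP => b;
    rewrite !inE.
case/andP => deg_ab bal_h.
have deg_cons v : deg ((a', b') :: h) v = ((a' == v) || (b' == v)) + deg h v by [].
case: (boolP ((a' == a) && (deg ((a', b') :: h) b' < T))) => [/andP [/eqP ea lt]|nc].
  (* balancedness: when (a, b') was answered, deg h a <= deg h b' < T - 1 *)
  have sub : light_nbrs ((a', b') :: h) T a \subset b' |: out_nbrs h a.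
    by apply/subsetP => b; rewrite !inE => /andP [/orP [/eqP [_ ->]|->] _];
      rewrite ?eqxx ?orbT.
  apply: leq_trans (subset_leq_card sub) _.
  have := card_out_nbrs h a.
  have : count (fun p => p.1 == a) h <= deg h a by apply: sub_count => p /= ->.
  have := leq_b1 (b' \notin out_nbrs h a).
  move: lt deg_ab; rewrite deg_cons eqxx orbT cardsU1 /deg ea; lia.
apply: leq_trans (IH bal_h); apply: subset_leq_card; apply/subsetP => b.
rewrite !inE => /andP [/orP [/eqP [e1 e2]|bh] lt].
  by move: nc lt; rewrite e1 e2 eqxx /= => /negP.
by rewrite bh /=; apply: leq_ltn_trans lt; rewrite deg_cons leq_addl.
Qed.

Lemma sum_deg h : \sum_v deg h v <= 2 * size h.
Proof.
elim: h => [|p h IH] /=; first by rewrite big1.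
rewrite big_split /= mulnS leq_add //.
have sum_eq1 w : \sum_v (w == v : nat) = 1.
  by rewrite (bigD1 w) //= eqxx big1 // => v; rewrite eq_sym => /negbTE ->.
apply: leq_trans (_ : \sum_v ((p.1 == v) + (p.2 == v)) <= 2).
  by apply: leq_sum => v _; case: (p.1 == v); case: (p.2 == v).
by rewrite big_split /= !sum_eq1.
Qed.

Definition heavy h T := [set v | T <= deg h v].

Lemma card_heavy h T : #|heavy h T| * T <= 2 * size h.
Proof.
apply: leq_trans (sum_deg h); rewrite -sum_nat_const big_mkcond /=.
by apply: leq_sum => v _; rewrite inE; case: ifP.
Qed.

Lemma reach_growth h e j T : 0 < T -> balanced h ->
  T * #|reach h e j.+1| <= T * (T + 1) * #|reach h e j| + 2 * size h.
Proof.
move=> T_gt0 bal_h.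
set B := reach h e j.
have sub : reach h e j.+1 \subset
    (B :|: heavy h T) :|: \bigcup_(a in B) light_nbrs h T a.
  apply/subsetP => b /=; rewrite -/B !inE => /orP [->//|/bigcupP [a aB ab]].
  case: (leqP T (deg h b)) => [_|lt]; first by rewrite orbT.
  by apply/orP; right; apply/bigcupP; exists a; rewrite // inE ab.
have card_light : #|\bigcup_(a in B) light_nbrs h T a| <= #|B| * T.
  rewrite -sum_nat_const; apply: leq_trans (card_bigcup_le _ _) _.
  by apply: leq_sum => a _; apply: card_light_nbrs.
have := card_heavy h T.
have : #|reach h e j.+1| <= #|B| + #|heavy h T| + #|B| * T.
  apply: leq_trans (subset_leq_card sub) _.
  apply: leq_trans (leq_card_setU _ _) _; apply: leq_add => //.
  exact: leq_card_setU.
nia.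
Qed.

Lemma sum_reach_growth h (out : seq 'I_n) j T :
  0 < T -> balanced h ->
  T * \sum_(e <- out) #|reach h e j.+1| <=
    T * (T + 1) * \sum_(e <- out) #|reach h e j| + size out * (2 * size h).
Proof.
move=> T_gt0 bal_h; elim: out => [|e s IH]; first by rewrite !big_nil !muln0.
rewrite !big_cons mulnDr mulnDr [size _]/= mulSn.
have := reach_growth e j T_gt0 bal_h; lia.
Qed.

Lemma card_reach_le h e j : #|reach h e j| <= (size h).+1.
Proof.
have sub : reach h e j \subset e |: [set b in [seq p.2 | p <- h]].
  elim: j => [|j IH] /=; first by rewrite sub1set setU11.
  rewrite subUset IH; apply/bigcupsP => a _; apply/subsetP => b; rewrite !inE => ab.
  by apply/orP; right; apply/mapP; exists (a, b).
apply: leq_trans (subset_leq_card sub) _.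
rewrite cardsU1 cardsE -add1n leq_add ?leq_b1 //.
by apply: leq_trans (card_size _) _; rewrite size_map.
Qed.

Lemma card_reach1 h e : #|reach h e 1| <= (count (fun p => p.1 == e) h).+1.
Proof.
by rewrite /= big_set1 cardsU1 -add1n leq_add ?leq_b1 ?card_out_nbrs.
Qed.

Lemma reach1_gt1 h e k : 1 < #|reach h e k| -> 1 < #|reach h e 1|.
Proof.
apply: contraLR; rewrite -!leqNgt => reach1.
have reach1E : reach h e 1 = [set e].
  by apply/eqP; rewrite eq_sym eqEcard sub1set cards1 reach1 reach_center.
suff -> : reach h e k = [set e] by rewrite cards1.
elim: k => [|k IH] //; by rewrite -reach1E /= IH.
Qed.

Lemma sum_card_reach1 (out : seq 'I_n) h : uniq out ->
  \sum_(e <- out) #|reach h e 1| <= size out + size h.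
Proof.
move=> uniq_out.
apply: (@leq_trans (\sum_(e <- out) (1 + count (fun p => p.1 == e) h))).
  by apply: leq_sum => e _; rewrite add1n card_reach1.
rewrite big_split /= sum1_size leq_add2l; elim: h => [|p h IH] /=; first by rewrite big1.
rewrite big_split /= -add1n leq_add //.
have -> : \sum_(e <- out) (p.1 == e : nat) = count_mem p.1 out.
  rewrite -sum1_count [RHS]big_mkcond /=; apply: eq_bigr => e _; rewrite eq_sym.
  by case: (_ == _).
by rewrite count_uniq_mem // leq_b1.
Qed.

End Growth.

Section GrowthRecurrence.
Variable R : realType.
Local Open Scope ring_scope.
Implicit Types m p Q u v : R.

Lemma growth_step m p Q u v :
  0 < p -> 16 * p <= Q -> Q ^+ 2 = m * p -> u <= 32 * p ->
  (forall T : nat, (0 < T)%N -> v * T%:R <= u * (T%:R + 1) * T%:R + 2 * m) ->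
  v <= 32 * Q.
Proof.
move=> p_gt0 pQ Q2 up rec.
have p2_gt0 : 0 < 2 * p by rewrite mulr_gt0.
(* the recurrence is used with T = floor (Q / 2p) *)
have Qp_ge0 : 0 <= Q / (2 * p) by rewrite divr_ge0 ?(ltW p2_gt0) //; lra.
have /andP [] := truncn_itv Qp_ge0; set t := Num.truncn _.
rewrite ler_pdivlMr ?ltr_pdivrMr // -natr1 => tQ Qt.
have t_ge1 : 1 <= (t%:R : R) by rewrite ler1n lt0n; apply: contraTneq Qt => ->; lra.
have m_le : m <= 4 * Q * t%:R.
  by rewrite -(ler_pM2r p_gt0) -Q2 expr2; nra.
have uT : u * (t%:R + 1) * t%:R <= 32 * p * (t%:R + 1) * t%:R.
  by rewrite ler_pM2r ?ler_pM2r //; lra.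
have : v * t%:R <= 32 * Q * t%:R by have := rec t; rewrite -(ltr0n R); nra.
by rewrite ler_pM2r //; lra.
Qed.

Definition sqrt_chain m p0 i : R := iter i (fun p => Num.sqrt (m * p)) p0.

Section SqrtChain.
Variables m p0 : R.
Hypotheses (m_gt0 : 0 < m) (p0_gt0 : 0 < p0).
Local Notation P := (sqrt_chain m p0).

Lemma sqrt_chain_gt0 i : 0 < P i.
Proof. by elim: i => [|i IH] //=; rewrite sqrtr_gt0 mulr_gt0. Qed.

Lemma sqrt_chainS_sqr i : P i.+1 ^+ 2 = m * P i.
Proof. by rewrite /= sqr_sqrtr // mulr_ge0 ?ltW ?sqrt_chain_gt0. Qed.

Lemma sqrt_chain_exp i : P i ^+ (2 ^ i) = m ^+ (2 ^ i - 1) * p0.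
Proof.
elim: i => [|i IH]; first by rewrite expr1 subnn expr0 mul1r.
rewrite expnS exprM sqrt_chainS_sqr exprMn IH mulrA -exprD.
by congr (_ ^+ _ * _); have := expn_gt0 2 i; lia.
Qed.

Lemma sqrt_chain_ratio i : 256 ^+ (2 ^ i) * p0 <= m -> 16 * P i <= P i.+1.
Proof.
move=> cond; have P_ge0 j : 0 <= P j by apply/ltW/sqrt_chain_gt0.
have step : 256 * P i <= m.
  have pow_gt0 : (0 < 2 ^ i)%N by rewrite expn_gt0.
  rewrite -(ler_pXn2r pow_gt0) ?nnegrE ?mulr_ge0 ?(ltW m_gt0) //.
  rewrite exprMn sqrt_chain_exp mulrCA.
  have -> : m ^+ (2 ^ i) = m ^+ (2 ^ i - 1) * m by rewrite -exprSr; congr (_ ^+ _); lia.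
  by rewrite ler_pM2l ?exprn_gt0.
rewrite -(ler_pXn2r (isT : (0 < 2)%N)) ?nnegrE ?mulr_ge0 //.
rewrite sqrt_chainS_sqr exprMn expr2 mulrA ler_wpM2r //; lra.
Qed.

End SqrtChain.

Lemma growth_bound m p0 (b : nat -> R) k :
  0 < m -> 0 < p0 -> (forall i, 0 <= b i) ->
  (forall i (T : nat), (0 < T)%N -> b i.+1 * T%:R <= b i * (T%:R + 1) * T%:R + 2 * m) ->
  b 0%N <= 32 * p0 -> (forall i, (i < k)%N -> 256 ^+ (2 ^ i) * p0 <= m) ->
  b k ^+ (2 ^ k) <= 32 ^+ (2 ^ k) * (m ^+ (2 ^ k - 1) * p0).
Proof.
move=> m_gt0 p0_gt0 b_ge0 rec b0 cond.
suff bk : b k <= 32 * sqrt_chain m p0 k.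
  rewrite -sqrt_chain_exp // -exprMn; apply: lerXn2r bk; rewrite nnegrE //.
  by rewrite mulr_ge0 // ltW // sqrt_chain_gt0.
elim: k cond => [//|k IH] cond.
apply: (growth_step (sqrt_chain_gt0 m_gt0 p0_gt0 k) _
  (sqrt_chainS_sqr m_gt0 p0_gt0 k) _ (rec k)).
  exact/sqrt_chain_ratio/cond.
by apply: IH => i ik; apply: cond; apply: ltnW.
Qed.

End GrowthRecurrence.

Section ReachBounds.
Variables (R : realType) (n : nat) (h : seq ('I_n * 'I_n)).
Hypothesis bal_h : balanced h.
Local Notation M := (size h).
Local Open Scope ring_scope.

Lemma reach_growth_real e i (T : nat) : (0 < T)%N ->
  #|reach h e i.+1|%:R * T%:R <= #|reach h e i|%:R * (T%:R + 1) * T%:R + 2 * M%:R :> R.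
Proof.
move=> T_gt0; have := reach_growth e i T_gt0 bal_h.
by rewrite -(ler_nat R) !natrD !natrM; lra.
Qed.

Lemma card_reach_exp_le e k : (256 ^ (2 ^ k.-1) <= M)%N ->
  (#|reach h e k| ^ (2 ^ k) <= 32 ^ (2 ^ k) * M ^ (2 ^ k - 1))%N.
Proof.
move=> hM; rewrite -(ler_nat R) natrM !natrX -[X in _ <= _ * X]mulr1.
apply: (@growth_bound R M%:R 1 (fun j => #|reach h e j|%:R) k) => //.
- by rewrite ltr0n; apply: leq_trans hM; rewrite expn_gt0.
- exact: reach_growth_real.
- by rewrite /= cards1; lra.
move=> i ik; rewrite mulr1 -natrX ler_nat; apply: leq_trans hM.
by rewrite leq_pexp2l // leq_pexp2l //; lia.
Qed.

Lemma card_reach_bound e q k : (0 < k)%N -> (q < #|reach h e k|)%N ->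
  (q ^ (2 ^ k) <= (1024 * M) ^ (2 ^ k - 1))%N.
Proof.
move=> k_gt0 q_lt.
have qM : (q <= M)%N by have := card_reach_le h e k; lia.
have two_k : (2 ^ k = (2 ^ k - 1).+1)%N by have := expn_gt0 2 k; lia.
have d_gt0 : (0 < 2 ^ k - 1)%N by rewrite subn_gt0 -{1}(expn0 2) ltn_exp2l.
case: (leqP (256 ^ (2 ^ k.-1)) M) => hM.
  have q_reach : (q ^ 2 ^ k <= #|reach h e k| ^ 2 ^ k)%N.
    by rewrite leq_exp2r ?expn_gt0 // ltnW.
  apply: leq_trans q_reach (leq_trans (card_reach_exp_le e hM) _).
  rewrite expnMn leq_mul2r (_ : 1024 = 32 ^ 2)%N // -expnM leq_pexp2l ?orbT //; lia.
rewrite {1}two_k expnSr expnMn [X in (_ <= X)%N]mulnC leq_mul ?leq_exp2r //.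
apply: leq_trans qM (leq_trans (ltnW hM) _).
apply: (@leq_trans (1024 ^ 2 ^ k.-1)); first by rewrite leq_exp2r ?expn_gt0.
by rewrite leq_pexp2l // -ltnS -two_k ltn_exp2l // ltn_predL.
Qed.

Section Average.
Variable out : seq 'I_n.
Hypothesis uniq_out : uniq out.
Local Notation r := (size out).
Local Notation S j := (\sum_(e <- out) #|reach h e j|)%N.

Lemma sum_card_reach_exp_le k : (0 < r <= M)%N ->
  (forall i, i < k -> 256 ^ (2 ^ i) <= r)%N ->
  (S k.+1 ^ (2 ^ k) <= 32 ^ (2 ^ k) * M ^ (2 ^ k) * r ^ (2 ^ k - 1))%N.
Proof.
move=> /andP [r_gt0 rM] cond.
have rR : 0 < r%:R :> R by rewrite ltr0n.
have N_eq : (2 ^ k = (2 ^ k - 1).+1)%N by have := expn_gt0 2 k; lia.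
rewrite -(ler_nat R) !natrM !natrX.
(* the average ball size obeys the recurrence of [growth_bound], from M / r *)
have -> : 32 ^+ (2 ^ k) * M%:R ^+ (2 ^ k) * r%:R ^+ (2 ^ k - 1) =
    32 ^+ (2 ^ k) * (M%:R ^+ (2 ^ k - 1) * (M%:R / r%:R)) * r%:R ^+ (2 ^ k) :> R.
  set d := (2 ^ k - 1)%N in N_eq *; rewrite N_eq !exprS.
  by field; rewrite gt_eqF.
rewrite -ler_pdivrMr ?exprn_gt0 // -expr_div_n.
apply: (@growth_bound R M%:R (M%:R / r%:R) (fun j => (S j.+1)%:R / r%:R) k) => //.
- by rewrite ltr0n (leq_trans r_gt0).
- by rewrite divr_gt0 // ltr0n (leq_trans r_gt0).
- by move=> i; rewrite divr_ge0.
- move=> i T T_gt0; have := sum_reach_growth out i.+1 T_gt0 bal_h.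
  rewrite -(ler_nat R) !natrD !natrM => growth; rewrite -(ler_pM2r rR).
  have -> : (S i.+2)%:R / r%:R * T%:R * r%:R = (S i.+2)%:R * T%:R :> R.
    by field; rewrite gt_eqF.
  have -> : ((S i.+1)%:R / r%:R * (T%:R + 1) * T%:R + 2 * M%:R) * r%:R =
      (S i.+1)%:R * (T%:R + 1) * T%:R + r%:R * (2 * M%:R) :> R.
    by field; rewrite gt_eqF.
  lra.
- rewrite mulrA ler_pM2r ?invr_gt0 // -natrM ler_nat.
  by apply: leq_trans (sum_card_reach1 h uniq_out) _; lia.
move=> i ik; rewrite mulrA ler_pdivrMr // mulrC ler_pM2l ?ltr0n ?(leq_trans r_gt0) //.
by rewrite -natrX ler_nat cond.
Qed.

Lemma sum_card_reach_bound q k : (0 < k)%N ->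
  (forall e, e \in out -> q < #|reach h e k|)%N ->
  (q ^ (2 ^ k.-1) * r <= (1024 * M) ^ (2 ^ k.-1))%N.
Proof.
case: k => [//|k] _ q_lt; rewrite succnK.
have N_gt0 : (0 < 2 ^ k)%N by rewrite expn_gt0.
case: (posnP q) => [->|q_gt0]; first by rewrite exp0n.
case: (posnP r) => [->|r_gt0]; first by rewrite muln0.
have qM : (q <= M)%N.
  case: out r_gt0 q_lt => [//|e0 s] _ /(_ e0 (mem_head _ _)).
  by have := card_reach_le h e0 k.+1; lia.
have rM : (r <= M)%N.
  have : (2 * r <= S 1)%N.
    rewrite mulnC -sum1_size big_distrl /= big_seq [leqRHS]big_seq.
    apply: leq_sum => e e_in; rewrite mul1n (@reach1_gt1 _ _ _ k.+1) //.
    exact: leq_ltn_trans q_gt0 (q_lt e e_in).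
  have := sum_card_reach1 h uniq_out; lia.
case: (ltnP r (16 ^ 2 ^ k)) => [small|large].
  rewrite expnMn mulnC leq_mul ?leq_exp2r //.
  by apply: leq_trans (ltnW small) _; rewrite leq_exp2r.
have cond i : (i < k)%N -> (256 ^ 2 ^ i <= r)%N.
  move=> ik; apply: leq_trans large; rewrite (_ : 256 = 16 ^ 2)%N // -expnM -expnS.
  by rewrite leq_pexp2l // leq_pexp2l.
have qr_le : (q * r <= S k.+1)%N.
  rewrite mulnC -sum1_size big_distrl /= big_seq [leqRHS]big_seq.
  by apply: leq_sum => e e_in; rewrite mul1n ltnW // q_lt.
have : ((q * r) ^ 2 ^ k <= S k.+1 ^ 2 ^ k)%N by rewrite leq_exp2r.
move/leq_trans/(_ (sum_card_reach_exp_le (introT andP (conj r_gt0 rM)) cond)).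
set d := (2 ^ k - 1)%N; have -> : (2 ^ k = d.+1)%N by lia.
rewrite expnMn [(r ^ d.+1)%N]expnS mulnA leq_pmul2r ?expn_gt0 ?r_gt0 //.
move=> /leq_trans; apply.
by rewrite expnMn leq_mul2r leq_exp2r ?orbT.
Qed.

End Average.

End ReachBounds.

Section RootBounds.
Variable R : realType.
Local Open Scope ring_scope.
Implicit Types a b c : R.

Lemma powR_1addV_le a b d : (0 < d)%N -> 0 <= a -> 0 <= b ->
  a ^+ d.+1 <= b ^+ d -> a `^ (1 + d%:R^-1) <= b.
Proof.
move=> d_gt0 a_ge0 b_ge0 ab.
rewrite -(ler_pXn2r d_gt0) ?nnegrE ?powR_ge0 // -powR_mulrn ?powR_ge0 // -powRrM.
have -> : (1 + d%:R^-1) * d%:R = d.+1%:R :> R by field; rewrite pnatr_eq0 -lt0n.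
by rewrite powR_mulrn.
Qed.

Lemma mulr_powRV_le a b c N : (0 < N)%N -> 0 <= a -> 0 <= b -> 0 <= c ->
  a ^+ N * c <= b ^+ N -> a * c `^ N%:R^-1 <= b.
Proof.
move=> N_gt0 a_ge0 b_ge0 c_ge0 abc.
rewrite -(ler_pXn2r N_gt0) ?nnegrE ?mulr_ge0 ?powR_ge0 // exprMn.
rewrite -[(c `^ _) ^+ _]powR_mulrn ?powR_ge0 // -powRrM mulVf ?powRr1 //.
by rewrite pnatr_eq0 -lt0n.
Qed.

End RootBounds.

Local Open Scope ring_scope.

Theorem mainTheorem15 (R : realType) :
  exists c : R, 0 < c /\
  forall (n m r q k : nat) (t : ctree n),
    (0 < k)%N -> (0 < r)%N ->
    (depth t <= m)%N ->
    guarantees R r q k t [::] ->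
    c * Num.max (q%:R `^ (1 + ((2 ^ k - 1)%N%:R)^-1))
                (q%:R * r%:R `^ ((2 ^ (k - 1))%N%:R)^-1) <= m%:R.
Proof.
exists 1024^-1; split=> [|n m r q k t k_gt0 r_gt0 depth_m G]; first by rewrite invr_gt0.
have [out [h [bal_h size_h leaf]]] := balanced_leaf (isT : balanced [::]) G.
have hm : (size h <= m)%N by rewrite addn0 in size_h; exact: leq_trans size_h depth_m.
have consistent0 : consistent (fun _ : 'I_n => 0 : R) h.
  by move=> p _; rewrite subrr ler01.
have [size_out uniq_out _] := leaf _ consistent0.
have q_lt e : e \in out -> (q < #|reach h e k|)%N.
  by move=> e_in; apply: (@guaranteed_lt_card_reach _ h R) => x /leaf [_ _]; apply.
have [e0 e0_in] : exists e0, e0 \in out.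
  move: r_gt0; rewrite -size_out; case: (out) => [//|e0 s _].
  by exists e0; rewrite mem_head.
suff : Num.max (q%:R `^ (1 + ((2 ^ k - 1)%N%:R)^-1))
    (q%:R * r%:R `^ ((2 ^ (k - 1))%N%:R)^-1) <= 1024 * m%:R :> R by lra.
have hmR : 1024 * (size h)%:R <= 1024 * m%:R :> R by rewrite ler_pM2l // ler_nat.
rewrite ge_max; apply/andP; split.
  have d_gt0 : (0 < 2 ^ k - 1)%N by rewrite subn_gt0 -{1}(expn0 2) ltn_exp2l.
  apply: powR_1addV_le; rewrite ?mulr_ge0 // -addn1 subnK ?expn_gt0 //.
  move: (card_reach_bound R bal_h k_gt0 (q_lt e0 e0_in)).
  rewrite -(ler_nat R) natrX natrX natrM => /le_trans; apply.
  by rewrite lerXn2r ?nnegrE ?mulr_ge0.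
rewrite subn1; apply: mulr_powRV_le; rewrite ?mulr_ge0 ?expn_gt0 // -size_out.
move: (sum_card_reach_bound R bal_h uniq_out k_gt0 q_lt).
rewrite -(ler_nat R) natrM natrX natrX natrM => /le_trans; apply.
by rewrite lerXn2r ?nnegrE ?mulr_ge0.
Qed.
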